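(* Let $\mathcal{P}$ be a poset (not necessarily finite) of composition length at least $2$ whose Hasse diagram is a rooted tree with root $r$, and let $M$ be a $k\mathcal{P}$-module such that $\partial_0^*M\cong\partial_1^*M$ as $k\mathcal{G}^{\mathcal{P}}_1$-modules. Then: (1) for any $a\ne r$ and any $x,y>a$ in $\mathcal{P}$, $\ker M(a<x)=\ker M(a<y)$; (2) if $a<b$ and $c<d$ lie in the same line-component of $\mathcal{P}$ and $a,c\neq r$, then $\ker M(a<b)\cong\ker M(c<d)$; (3) if moreover $r$ has a unique successor $s$, then $\ker M(r<s)=\ker M(r<s')$ for every $s'>s$ that is not maximal in $\mathcal{P}$.
   Context: A poset is viewed as a category with a unique morphism $x\to y$ (written $x<y$ or $x\le y$) iff $x\le y$. A $k\mathcal{P}$-module is a functor to finite-dimensional $k$-vector spaces ($k$ a field). The composition length is the maximal length of a chain of covering relations $x_0\lessdot x_1\lessdot\cdots\lessdot x_m$. The Hasse diagram is a rooted tree with root $r$ means: $r$ is the unique minimal element and every $x\ne r$ has exactly one lower cover. A successor of $x$ is an upper cover of $x$. $\mathcal{G}^{\mathcal{P}}_1$ is the poset whose elements are the strict relations $a<b$ of $\mathcal{P}$ (written $[a<b]$), with $[a<b]\le[c<d]$ iff $[a<b]=[c<d]$ or $b\le c$; $\partial_0[a<b]=b$, $\partial_1[a<b]=a$, and $F^*M=M\circ F$. A set of strict relations is a line-component if it is the set of elements of a connected component of $\mathcal{G}^{\mathcal{P}}_1$. *)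

From HB Require Import structures.
From mathcomp Require Import all_boot all_order all_algebra.
From Stdlib Require Import Relations.Relation_Operators.
Set Implicit Arguments. Unset Strict Implicit. Unset Printing Implicit Defensive.
Import Order.POrderTheory GRing.Theory.
Local Open Scope order_scope.

(* A representation of a "category given by a relation" R on S (a poset viewed
   as a category, with a unique morphism x -> y iff R x y) in finite-dimensional
   k-vector spaces: the space at x is k^(rdim x) (row vectors) and the map for
   x -> y is the matrix rmor h, acting on row vectors by v |-> v *m rmor h. *)
Record rep (k : fieldType) (S : Type) (R : S -> S -> Prop) := Rep {
  rdim : S -> nat;
  rmor : forall x y, R x y -> 'M[k]_(rdim x, rdim y) }.
Arguments rmor {k S R} r {x y} h.
Arguments rdim {k S R} r x.

Definition is_rep (k : fieldType) S (R : S -> S -> Prop) (M : rep k R) : Prop :=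
  (forall x (h : R x x), rmor M h = (1%:M)%R) /\
  (forall x y z (hxy : R x y) (hyz : R y z) (hxz : R x z),
      rmor M hxz = (rmor M hxy *m rmor M hyz)%R).

Definition pullback (k : fieldType) S T (RS : S -> S -> Prop) (RT : T -> T -> Prop)
  (F : S -> T) (Fm : forall u v, RS u v -> RT (F u) (F v)) (M : rep k RT) : rep k RS :=
  @Rep k S RS (fun u => rdim M (F u)) (fun u v h => rmor M (Fm u v h)).

Definition rep_iso (k : fieldType) S (R : S -> S -> Prop) (N1 N2 : rep k R) : Prop :=
  exists (phi : forall u, 'M[k]_(rdim N1 u, rdim N2 u))
         (psi : forall u, 'M[k]_(rdim N2 u, rdim N1 u)),
    (forall u, (phi u *m psi u = (1%:M)%R)%R /\ (psi u *m phi u = (1%:M)%R)%R) /\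
    (forall u v (h : R u v), (rmor N1 h *m phi v = phi u *m rmor N2 h)%R).

Section Poset.
Variables (disp : Order.disp_t) (T : porderType disp).

Definition Pmod (k : fieldType) := rep k (fun x y : T => x <= y).

Definition kerM (k : fieldType) (M : Pmod k) (a b : T) (h : a < b) :=
  kermx (rmor M (ltW h)).

Definition covers (x y : T) : Prop := x < y /\ ~ (exists z, x < z /\ z < y).
Definition comp_length_ge2 : Prop :=
  exists x0 x1 x2 : T, covers x0 x1 /\ covers x1 x2.

Definition minimal (x : T) : Prop := forall y, ~ (y < x).
Definition hasse_rooted_tree (r : T) : Prop :=
  minimal r /\ (forall x, minimal x -> x = r) /\
  (forall x, x <> r -> exists y, covers y x /\ forall y', covers y' x -> y' = y).

Definition G1 := {p : T * T | p.1 < p.2}.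
Definition G1rel (a b : T) (h : a < b) : G1 := exist (fun p : T * T => p.1 < p.2) (a, b) h.
Definition G1le (g h : G1) : Prop := g = h \/ (sval g).2 <= (sval h).1.
Definition d0 (g : G1) : T := (sval g).2.
Definition d1 (g : G1) : T := (sval g).1.

Lemma d0_mono g h : G1le g h -> d0 g <= d0 h.
Proof.
case=> [->|H]; first exact: lexx.
exact: le_trans H (ltW (svalP h)).
Qed.

Lemma d1_mono g h : G1le g h -> d1 g <= d1 h.
Proof.
case=> [->|H]; first exact: lexx.
exact: le_trans (ltW (svalP g)) H.
Qed.

Definition same_line_component (g h : G1) : Prop :=
  clos_refl_trans G1 (fun u v => G1le u v \/ G1le v u) g h.

Definition successor (x y : T) : Prop := covers x y.
Definition maximal (x : T) : Prop := forall y, ~ (x < y).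

End Poset.

(* Write φ_[a<b] : M(b) → M(a) for the components of the isomorphism
   ∂_0^*M ≅ ∂_1^*M.  For a < b ≤ x < t we have [a<b] ≤ [x<t] in G_1, and
   naturality reads M(b≤t) φ_[x<t] = φ_[a<b] M(a≤x).  As the φ are
   invertible, ker M(b≤t) is the image of ker M(a≤x) under φ_[a<b]^-1.
   (1) For b = x = a and some p < a (a is not the root), ker M(a<t) is
   φ_[p<a]^-1(ker M(p≤a)), whatever t is.
   (2) For x = b, ker M(a<b) and ker M(b<d) have the same dimension, hence so
   do any two comparable elements of G_1.
   (3) For t > s', both ker M(r≤s) and ker M(r≤s') are sent onto ker M(s≤t)
   by φ_[r<s]^-1. *)
From HB Require Import structures.
From mathcomp Require Import all_boot all_order all_algebra.
From Stdlib Require Import Classical.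
Set Implicit Arguments. Unset Strict Implicit. Unset Printing Implicit Defensive.
Import Order.POrderTheory GRing.Theory.
Local Open Scope ring_scope.

Section KernelsOfProducts.
Variable F : fieldType.

Lemma kermx_mulmx_free m n p (A : 'M[F]_(m, n)) (B : 'M_(n, p)) :
  row_free B -> (kermx (A *m B) == kermx A)%MS.
Proof.
move=> /row_freeP [C BC]; apply/andP; split; apply/sub_kermxP.
  have -> : kermx (A *m B) *m A = kermx (A *m B) *m (A *m B) *m C
    by rewrite -!mulmxA BC mulmx1.
  by rewrite mulmx_ker mul0mx.
by rewrite mulmxA mulmx_ker mul0mx.
Qed.

Lemma kermx_mulmx_iso m n p (P : 'M[F]_(m, n)) (Q : 'M_(n, m)) (A : 'M_(n, p)) :
  P *m Q = 1%:M -> Q *m P = 1%:M -> (kermx (P *m A) == kermx A *m Q)%MS.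
Proof.
move=> PQ QP; apply/andP; split.
  rewrite -[X in (X <= _)%MS]mulmx1 -PQ mulmxA submxMr //.
  by apply/sub_kermxP; rewrite -mulmxA mulmx_ker.
by apply/sub_kermxP; rewrite -mulmxA (mulmxA Q) QP mul1mx mulmx_ker.
Qed.

Lemma eqmxMfree m1 m2 n p (A : 'M[F]_(m1, n)) (B : 'M_(m2, n)) (C : 'M_(n, p)) :
  row_free C -> (A *m C == B *m C)%MS = (A == B)%MS.
Proof. by move=> freeC; rewrite !submxMfree. Qed.

End KernelsOfProducts.

Local Open Scope order_scope.

Lemma hasse_rooted_tree_below disp (T : porderType disp) (r a : T) :
  hasse_rooted_tree r -> a <> r -> exists p, p < a.
Proof. by move=> [_ [_ tree]] /tree [p [[pa _] _]]; exists p. Qed.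

Lemma not_maximalP disp (T : porderType disp) (x : T) :
  ~ maximal x -> exists y, x < y.
Proof. by move=> xNmax; apply: not_all_not_ex => xmax; apply: xNmax. Qed.

Section IsomorphicPullbacks.
Variables (k : fieldType) (disp : Order.disp_t) (T : porderType disp).
Variable M : Pmod T k.
Variable phi : forall u : G1 T, 'M[k]_(rdim M (d0 u), rdim M (d1 u)).
Variable psi : forall u : G1 T, 'M[k]_(rdim M (d1 u), rdim M (d0 u)).
Hypothesis phiK : forall u, phi u *m psi u = 1%:M /\ psi u *m phi u = 1%:M.
Hypothesis phi_natural : forall u v (h : G1le u v),
  rmor M (d0_mono h) *m phi v = phi u *m rmor M (d1_mono h).

Lemma phi_free u : row_free (phi u).
Proof. by apply/row_freeP; exists (psi u); case: (phiK u). Qed.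

Lemma psi_free u : row_free (psi u).
Proof. by apply/row_freeP; exists (phi u); case: (phiK u). Qed.

Lemma rmor_irrelevance (x y : T) (h h' : x <= y) : rmor M h = rmor M h'.
Proof. by rewrite (bool_irrelevance h h'). Qed.

Lemma phi_naturalE a b x t (hab : a < b) (hbx : b <= x) (hxt : x < t)
    (hbt : b <= t) (hax : a <= x) :
  rmor M hbt *m phi (G1rel hxt) = phi (G1rel hab) *m rmor M hax.
Proof.
have := phi_natural (or_intror hbx : G1le (G1rel hab) (G1rel hxt)).
by rewrite (rmor_irrelevance _ hbt) (rmor_irrelevance _ hax).
Qed.

Lemma kermx_rmor_transport a b x t (hab : a < b) (hbx : b <= x) (hxt : x < t)
    (hbt : b <= t) (hax : a <= x) :
  (kermx (rmor M hbt) == kermx (rmor M hax) *m psi (G1rel hab))%MS.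
Proof.
have [phiKl psiKl] := phiK (G1rel hab).
have kerE := eqmxP (kermx_mulmx_free (rmor M hbt) (phi_free (G1rel hxt))).
apply/eqmxP; apply: eqmx_trans (eqmx_sym kerE) _.
by rewrite (phi_naturalE hab hbx hxt hbt hax); apply/eqmxP/kermx_mulmx_iso.
Qed.

Lemma rank_kermx_rmor_transport a b x t (hab : a < b) (hbx : b <= x) (hxt : x < t)
    (hbt : b <= t) (hax : a <= x) :
  \rank (kermx (rmor M hbt)) = \rank (kermx (rmor M hax)).
Proof.
rewrite (eqmxP (kermx_rmor_transport hab hbx hxt hbt hax)) mxrankMfree //.
exact: psi_free (G1rel hab).
Qed.

Definition ker_rank (u : G1 T) := \rank (kermx (rmor M (ltW (proj2_sig u)))).

Lemma ker_rank_adjacent a b d (hab : a < b) (hbd : b < d) :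
  ker_rank (G1rel hab) = ker_rank (G1rel hbd).
Proof. by symmetry; exact: rank_kermx_rmor_transport hab (lexx b) hbd _ _. Qed.

Lemma ker_rank_G1le u v : G1le u v -> ker_rank u = ker_rank v.
Proof.
case=> [-> // |]; case: u => [[a b] hab]; case: v => [[c d] hcd] /=.
rewrite le_eqVlt => /orP [/eqP bc | hbc].
  by subst c; exact: (ker_rank_adjacent hab hcd).
exact: etrans (ker_rank_adjacent hab hbc) (ker_rank_adjacent hbc hcd).
Qed.

Lemma ker_rank_line_component u v :
  same_line_component u v -> ker_rank u = ker_rank v.
Proof.
elim=> [{}u {}v [/ker_rank_G1le | /ker_rank_G1le ->] | // | u' v' w _ -> _ ->] //.
Qed.

End IsomorphicPullbacks.

Theorem lemma4p5 (k : fieldType) (disp : Order.disp_t) (T : porderType disp)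
  (r : T) (M : @Pmod _ T k) :
  comp_length_ge2 T ->
  hasse_rooted_tree r ->
  is_rep M ->
  rep_iso (pullback (@d0_mono disp T) M) (pullback (@d1_mono disp T) M) ->
  [/\ (forall (a x y : T) (hx : (a < x)%O) (hy : (a < y)%O),
          a <> r -> (kerM M hx == kerM M hy)%MS),
      (forall (a b c d : T) (hab : (a < b)%O) (hcd : (c < d)%O),
          same_line_component (G1rel hab) (G1rel hcd) -> a <> r -> c <> r ->
          \rank (kerM M hab) = \rank (kerM M hcd))
    & (forall s : T, successor r s -> (forall t, successor r t -> t = s) ->
        forall (hrs : (r < s)%O) (s' : T) (hss' : (s < s')%O), ~ maximal s' ->
          (kerM M hrs == kerM M (lt_trans hrs hss'))%MS)].
Proof.
move=> _ tree _ [phi [psi [phiK phi_nat]]]; split.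
- move=> a x y hx hy /(hasse_rooted_tree_below tree) [p hpa].
  have kerE z (hz : a < z) :=
    eqmxP (kermx_rmor_transport phiK phi_nat hpa (lexx a) hz (ltW hz) (ltW hpa)).
  by apply/eqmxP; apply: eqmx_trans (kerE x hx) (eqmx_sym (kerE y hy)).
- move=> a b c d hab hcd line _ _.
  exact: (ker_rank_line_component phiK phi_nat line).
- move=> s _ _ hrs s' hss' /not_maximalP [t hs't].
  have hst : s <= t by exact: ltW (lt_trans hss' hs't).
  have kerE x (hsx : s <= x) (hxt : x < t) (hrx : r <= x) :=
    eqmxP (kermx_rmor_transport phiK phi_nat hrs hsx hxt hst hrx).
  rewrite -(eqmxMfree _ _ (psi_free phiK (G1rel hrs))); apply/eqmxP.
  exact: eqmx_trans (eqmx_sym (kerE s (lexx s) (lt_trans hss' hs't) _))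
    (kerE s' (ltW hss') hs't _).
Qed.
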